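(* Let $N\ge1$, $\chi_1,\dots,\chi_N\in\mathbb{C}$, and let $\Psi(x_1,\dots,x_N;t_1,\dots,t_N)$ be a holomorphic function on an open domain satisfying $$\sum_{i=1}^N(-2x_i\partial_{x_i}+2\chi_i)\Psi=0,\qquad \sum_{i=1}^N\partial_{x_i}\Psi=0,\qquad \sum_{i=1}^N(-x_i^2\partial_{x_i}+2\chi_ix_i)\Psi=0.$$ Define, on an open simply connected domain of $(x_1,\dots,x_{N+1};t_1,\dots,t_{N+1})$ where $x_i\neq x_{N+1}$, $t_i\neq t_{N+1}$ and $\xi_i=-\frac{t_i-t_{N+1}}{x_i-x_{N+1}}$ stays in the domain of $\Psi$ (with fixed branches of the powers), $$\Upsilon=\prod_{i=1}^N\left(\frac{(x_i-x_{N+1})^2}{t_i-t_{N+1}}\right)^{\chi_i}\Psi(\xi_1,\dots,\xi_N;t_1,\dots,t_N).$$ Then, with $\chi_{N+1}=k/2$ for an arbitrary $k\in\mathbb{C}$, $$\sum_{i=1}^{N+1}\partial_{x_i}\Upsilon=0,\qquad\sum_{i=1}^{N+1}t_i\partial_{x_i}\Upsilon=0,\qquad\sum_{i=1}^{N+1}(-2x_i\partial_{x_i}+2\chi_i)\Upsilon-k\Upsilon=0.$$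
   Context: These are the invariance (Ward) identities for $\mathrm{PGL}_2(\mathbb{C})$ conformal blocks on $\mathbb{P}^1$ with parabolic structures: $x_i$ are coordinates on the big cell of the flag variety at the $i$-th marked point $t_i$, and $e,h,f\in\mathfrak{sl}_2$ act at point $i$ by $\partial_{x_i}$, $-2x_i\partial_{x_i}+2\chi_i$, $-x_i^2\partial_{x_i}+2\chi_ix_i$. The functions are treated as holomorphic functions of all variables; $\partial_{x_i}$ in the identities for $\Upsilon$ denotes partial derivative in the variables $(x_1,\dots,x_{N+1},t_1,\dots,t_{N+1})$. *)

(* Complex numbers are  R[i]  for  R : realType,
   used through the regular (self-normed) copy  (R[i])^o  so that C^n carries
   its canonical topology / normed C-module structure. *)
From HB Require Import structures.
From mathcomp Require Import all_boot all_algebra.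
From mathcomp Require Import all_classical all_reals all_analysis.
From mathcomp Require Export complex.
Import GRing.Theory Num.Theory.
Import numFieldNormedType.Exports.

Set Implicit Arguments.
Unset Strict Implicit.
Unset Printing Implicit Defensive.

Local Open Scope ring_scope.
Local Open Scope complex_scope.

Notation CC R := ((R[i])^o).

Notation pt R n := ('rV[CC R]_n * 'rV[CC R]_n)%type.

Definition xco (R : realType) (n : nat) (p : pt R n) (j : 'I_n) : CC R := p.1 0 j.
Definition tco (R : realType) (n : nat) (p : pt R n) (j : 'I_n) : CC R := p.2 0 j.

Definition dx (R : realType) (n : nat) (f : pt R n -> CC R) (p : pt R n)
  (j : 'I_n) : CC R := 'D_(('e_j : 'rV[CC R]_n), (0 : 'rV[CC R]_n)) f p.

Definition holomorphic_on (R : realType) (n : nat) (D : set (pt R n))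
  (f : pt R n -> CC R) : Prop :=
  open D /\ (forall p, D p -> differentiable f p).

Definition cexp (R : realType) (z : CC R) : CC R :=
  (expR (complex.Re (z : R[i])) * cos (complex.Im (z : R[i])))
    +i* (expR (complex.Re (z : R[i])) * sin (complex.Im (z : R[i]))).

Definition log_branch (R : realType) (n : nat) (U : set (pt R n))
  (w L : pt R n -> CC R) : Prop :=
  (forall p, U p -> differentiable L p) /\ (forall p, U p -> cexp (L p) = w p).

Definition iN (N : nat) (j : 'I_N) : 'I_N.+1 := widen_ord (leqnSn N) j.

Definition wq (R : realType) (N : nat) (j : 'I_N) (p : pt R N.+1) : CC R :=
  (xco p (iN j) - xco p ord_max) ^+ 2 / (tco p (iN j) - tco p ord_max).

Definition subst_pt (R : realType) (N : nat) (p : pt R N.+1) : pt R N :=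
  (\row_(j < N) (- (tco p (iN j) - tco p ord_max) / (xco p (iN j) - xco p ord_max)),
   \row_(j < N) tco p (iN j)).

(* Upsilon = prod_i cexp(chi_i L_i) * Psi(xi; t), with L_i the chosen branch
   of log((x_i-x_{N+1})^2/(t_i-t_{N+1})), i.e. cexp(chi_i L_i) is the chosen
   branch of ((x_i-x_{N+1})^2/(t_i-t_{N+1}))^chi_i *)
Definition Upsilon (R : realType) (N : nat) (chi : 'I_N.+1 -> CC R)
  (L : 'I_N -> pt R N.+1 -> CC R) (Psi : pt R N -> CC R) (p : pt R N.+1) : CC R :=
  (\prod_(j < N) cexp (chi (iN j) * L j p)) * Psi (subst_pt p).

From HB Require Import structures.
From mathcomp Require Import all_boot all_algebra.
From mathcomp Require Import all_classical all_reals all_analysis.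
From mathcomp Require Import complex.
From mathcomp Require Import ring lra.
Import GRing.Theory Num.Theory.
Import order.Order.TTheory.
Import numFieldNormedType.Exports.
Local Open Scope ring_scope.
Local Open Scope classical_set_scope.

(* Moving x_j alone moves each difference x_i - x_{N+1} affinely, with slope
   [ediff j i] = delta_ij - delta_{j,N+1}.  Differentiating the branch identity
   exp L_i = (x_i - x_{N+1})^2 / (t_i - t_{N+1}) gives
   dL_i/dx_j = 2 ediff j i / (x_i - x_{N+1}), and the chain rule through
   xi_i = - (t_i - t_{N+1}) / (x_i - x_{N+1}) gives
   dUpsilon/dx_j = sum_i ediff j i * T_i with explicit T_i ([Upsilon_dxi]).
   Hence sum_j w_j dUpsilon/dx_j = sum_i (w_i - w_{N+1}) T_i for any weights w:
   it vanishes for w = 1, and for w = t and w = -2x the factors t_i - t_{N+1}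
   and -2 (x_i - x_{N+1}) turn T_i into the summands of the f- and h-identities
   of Psi at xi, up to the factor - prod_i exp (chi_i L_i) and terms in chi_i
   that the weight chi_{N+1} = k/2 cancels.

   Complex differentiability of [cexp] comes from the real second-order bounds
   on e^a - 1 - a, cos b - 1 and sin b - b given by the mean value theorem. *)

Lemma sum_scale_pair0 (K : pzRingType) (V W : lmodType K) n (s : 'I_n -> K)
    (r : 'I_n -> V) :
  \sum_(i < n) s i *: ((r i, 0) : V * W) = (\sum_(i < n) s i *: r i, 0).
Proof.
rewrite (big_morph (fun x : V => ((x, 0) : V * W)) (id1 := 0) (op1 := +%R)) //.
- by apply: eq_bigr => i _; rewrite -[s i *: (r i, 0)]/(s i *: r i, s i *: 0) scaler0.
- by move=> x y; rewrite -[((x, 0) : V * W) + (y, 0)]/(x + y, 0 + 0) addr0.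
Qed.

Lemma sum_mul_delta (K : pzRingType) n (w : 'I_n -> K) (m : 'I_n) :
  \sum_(j < n) w j * ('e_j : 'rV[K]_n) 0 m = w m.
Proof.
rewrite (bigD1 m) //= mxE !eqxx /= mulr1 big1 ?addr0 // => k km.
by rewrite mxE eq_sym (negbTE km) andbF mulr0.
Qed.

Section derive_along_lines.
Context {K : numFieldType}.

Lemma derive_lineE {V W : normedModType K} (f : V -> W) (x v : V) :
  'D_v f x = 'D_1 (fun h : K => f (h *: v + x)) 0.
Proof.
rewrite /derive; suff -> :
    (fun h : K => h^-1 *: ((f \o shift x) (h *: v) - f x)) =
    (fun h : K => h^-1 *: (((fun h => f (h *: v + x)) \o shift 0) h%:A
                            - f (0 *: v + x))) by [].
by apply: funext => h /=; rewrite addr0 scale0r add0r [_%:A]mulr1 addrC.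
Qed.

Lemma is_derive1_diff_comp {V W : normedModType K} {g : K -> V} {f : V -> W}
    {x : K} {dg : V} :
  is_derive x (1 : K) g dg -> differentiable f (g x) ->
  is_derive x (1 : K) (f \o g) ('d f (g x) dg).
Proof.
move=> [gd <-] fd; have dgx : differentiable g x by apply/derivable1_diffP.
have dfg := differentiable_comp dgx fd.
split; first by apply/derivable1_diffP.
by rewrite deriveE // diff_comp // deriveE.
Qed.

Lemma is_derive1_chain {W : normedModType K} {g : K -> K} {f : K -> W}
    {x dg : K} {df : W} :
  is_derive x (1 : K) g dg -> is_derive (g x) (1 : K) f df ->
  is_derive x (1 : K) (fun h => f (g h)) (dg *: df).
Proof.
move=> gd fd; have dfx : differentiable f (g x).
  by apply/derivable1_diffP; exact: ex_derive.
have -> : dg *: df = 'd f (g x) dg.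
  by rewrite -[in RHS](mulr1 dg) -[dg * 1]/(dg *: (1 : K)) linearZ /= -deriveE ?derive_val.
exact: is_derive1_diff_comp.
Qed.

Lemma is_derive1_scaler {W : normedModType K} {f : K -> K} (u : W) {x df : K} :
  is_derive x (1 : K) f df -> is_derive x (1 : K) (fun h => f h *: u) (df *: u).
Proof.
move=> fd; have scale_u : differentiable ( *:%R ^~ u : K -> W) (f x) by [].
by have := is_derive1_diff_comp fd scale_u; rewrite diff_val.
Qed.

Lemma is_derive1_sum {W : normedModType K} {n} {f : 'I_n -> K -> W}
    {df : 'I_n -> W} {x : K} :
  (forall i, is_derive x (1 : K) (f i) (df i)) ->
  is_derive x (1 : K) (fun h => \sum_(i < n) f i h) (\sum_(i < n) df i).
Proof. by move=> fd; have := is_derive_sum fd; rewrite fct_sumE. Qed.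

Lemma is_derive_inv_affine (a b c : K) : a != 0 ->
  is_derive (0 : K) (1 : K) (fun h : K => - b / (a + h * c)) (b * c / a ^+ 2).
Proof.
move=> a0; have affine : is_derive (0 : K) (1 : K) (fun h : K => a + h * c) c.
  by apply: is_derive_eq; rewrite /GRing.scale /=; ring.
have a0' : a + 0 * c != 0 by rewrite mul0r addr0.
have inv : is_derive (0 : K) (1 : K) (fun h => (a + h * c)^-1) (- (a + 0 * c) ^- 2 *: c).
  by apply: DeriveDef; [exact: derivableV | rewrite deriveV ?derive_val].
apply: (is_derive_eq (is_deriveZ (- b) inv)).
by rewrite /GRing.scale /= mul0r addr0; field.
Qed.

End derive_along_lines.

Lemma cvg_to1_of_linear_error (K : numFieldType) (g : K -> K) (C : K) : 0 <= C ->
  (forall h : K, h != 0 -> `|h| <= 1 -> `|g h - 1| <= C * `|h|) ->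
  g h @[h --> (0 : K)^'] --> (1 : K).
Proof.
move=> C0 gC; apply/cvgrPdistC_le => e e0; rewrite near_withinE.
have CE0 : 0 < C + 1 + e by rewrite addr_gt0 // ltr_wpDl.
exists (e / (C + 1 + e)); first by rewrite /= divr_gt0.
move=> y /= ye yn0; rewrite sub0r normrN in ye.
have de1 : e / (C + 1 + e) <= 1 by rewrite ler_pdivrMr // mul1r lerDr addr_ge0.
rewrite (le_trans (gC y yn0 _)) //; first exact: le_trans (ltW ye) de1.
rewrite (le_trans (ler_wpM2l C0 (ltW ye))) //.
by rewrite mulrA ler_pdivrMr // mulrC ler_pM2l // -addrA lerDl addr_ge0 // ltW.
Qed.

Section real_bounds.
Context {R : realType}.

Lemma abs_le_of_derivative_bound (f df : R -> R) (B x : R) :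
  f 0 = 0 -> (forall c, is_derive c (1 : R) f (df c)) ->
  (forall c, `|c| <= `|x| -> `|df c| <= B) -> `|f x| <= B * `|x|.
Proof.
move=> f0 fd dfB.
have fc a b : {within `[a, b], continuous f}.
  by apply: derivable_within_continuous => y _; exact: ex_derive.
have [x0|x0|->] := ltgtP x 0; last by rewrite f0 normr0 mulr0.
- have [c cx E] := MVT_segment (ltW x0) (fun y _ => fd y) (fc x 0).
  have -> : f x = - (df c * (0 - x)) by rewrite -E f0 sub0r opprK.
  rewrite normrN normrM sub0r normrN ler_wpM2r // dfB //.
  by rewrite !ler0_norm ?(itvP cx) ?(ltW x0) // lerN2 (itvP cx).
- have [c cx E] := MVT_segment (ltW x0) (fun y _ => fd y) (fc 0 x).
  have -> : f x = df c * (x - 0) by rewrite -E f0 subr0.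
  rewrite subr0 normrM ler_wpM2r // dfB //.
  by rewrite !ger0_norm ?(itvP cx) ?(ltW x0).
Qed.

Lemma abs_sin_le (x : R) : `|sin x| <= `|x|.
Proof.
have := @abs_le_of_derivative_bound sin cos 1 x (sin0 R) (@is_derive_sin R).
by rewrite mul1r; apply=> c _; exact: cos_max.
Qed.

Lemma abs_cosB1_le (x : R) : `|cos x - 1| <= `|x|.
Proof.
have := @abs_le_of_derivative_bound (fun y => cos y - 1) (fun y => - sin y) 1 x.
rewrite mul1r; apply; first by rewrite cos0 subrr.
  by move=> c; apply: is_derive_eq; rewrite subr0.
by move=> c _; rewrite normrN sin_max.
Qed.

Lemma abs_cosB1_le_sqr (x : R) : `|cos x - 1| <= `|x| * `|x|.
Proof.
apply: (@abs_le_of_derivative_bound (fun y => cos y - 1) (fun y => - sin y)).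
- by rewrite cos0 subrr.
- by move=> c; apply: is_derive_eq; rewrite subr0.
- by move=> c cx; rewrite normrN (le_trans (abs_sin_le c)).
Qed.

Lemma abs_sinB_le_sqr (x : R) : `|sin x - x| <= `|x| * `|x|.
Proof.
apply: (@abs_le_of_derivative_bound (fun y => sin y - y) (fun y => cos y - 1)).
- by rewrite sin0 subrr.
- by move=> c cx; rewrite (le_trans (abs_cosB1_le c)).
Qed.

Lemma abs_expRB1_le (x : R) : `|expR x - 1| <= expR `|x| * `|x|.
Proof.
apply: (@abs_le_of_derivative_bound (fun y => expR y - 1) expR).
- by rewrite expR0 subrr.
- by move=> c; apply: is_derive_eq; rewrite subr0.
- move=> c cx; rewrite ger0_norm ?expR_ge0 // ler_expR.
  exact: le_trans (ler_norm c) cx.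
Qed.

Lemma abs_expRB1B_le (x : R) : `|expR x - 1 - x| <= expR `|x| * `|x| * `|x|.
Proof.
apply: (@abs_le_of_derivative_bound (fun y => expR y - 1 - y) (fun y => expR y - 1)).
- by rewrite expR0 !subrr.
- by move=> c; apply: is_derive_eq; rewrite subr0.
- move=> c cx; rewrite (le_trans (abs_expRB1_le c)) //.
  by rewrite ler_pM ?expR_ge0 // ler_expR.
Qed.

Lemma abs_le_hypot (a b : R) : `|a| <= Num.sqrt (a ^+ 2 + b ^+ 2).
Proof. by rewrite -sqrtr_sqr ler_wsqrtr // lerDl sqr_ge0. Qed.

Lemma hypot_le_abs_add (a b : R) : Num.sqrt (a ^+ 2 + b ^+ 2) <= `|a| + `|b|.
Proof.
rewrite -[X in _ <= X]ger0_norm ?addr_ge0 // -sqrtr_sqr ler_wsqrtr //.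
rewrite sqrrD !real_normK ?num_real //.
have := mulr_ge0 (normr_ge0 a) (normr_ge0 b); rewrite mulr2n; lra.
Qed.

End real_bounds.

Section complex_exponential.
Context {R : realType}.
Local Open Scope complex_scope.

Lemma cexpD (z w : CC R) : cexp (z + w) = cexp z * cexp w.
Proof.
case: z => a b; case: w => c d; rewrite /cexp /=.
by rewrite expRD cosD sinD; simpc; congr (_ +i* _); ring.
Qed.

Lemma cexp0 : cexp (0 : CC R) = 1.
Proof. by rewrite /cexp /= expR0 cos0 sin0 !mul1r. Qed.

Lemma cexp_sum n (F : 'I_n -> CC R) :
  cexp (\sum_(i < n) F i) = \prod_(i < n) cexp (F i).
Proof. by rewrite (big_morph _ cexpD cexp0). Qed.

Lemma cexpB1B_le (h : CC R) : `|h| <= 1 ->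
  `|cexp h - 1 - h| <= (3 * expR 1 + 1)%:C * `|h| ^+ 2.
Proof.
case: h => a b; rewrite !normc_def /= -rmorphXn -rmorphM !lecR.
set n := Num.sqrt (a ^+ 2 + b ^+ 2) => n1.
have an : `|a| <= n := abs_le_hypot a b.
have bn : `|b| <= n by rewrite /n addrC abs_le_hypot.
set E := expR 1; have E0 : 0 <= E by apply: expR_ge0.
have Ea : expR `|a| <= E by rewrite ler_expR (le_trans an).
have aa : `|a| * `|a| <= n * n by rewrite ler_pM.
have bb : `|b| * `|b| <= n * n by rewrite ler_pM.
have ab : `|a| * `|b| <= n * n by rewrite ler_pM.
have t1 : `|expR a - 1 - a| <= E * (n * n).
  by rewrite (le_trans (abs_expRB1B_le a)) // -mulrA ler_pM // ?expR_ge0 // mulr_ge0.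
have t2 : `|expR a * (cos b - 1)| <= E * (n * n).
  rewrite normrM ger0_norm ?expR_ge0 // ler_pM ?expR_ge0 //.
    by rewrite ler_expR (le_trans (ler_norm a)) // (le_trans an).
  exact: le_trans (abs_cosB1_le_sqr b) bb.
have t3 : `|(expR a - 1) * sin b| <= E * (n * n).
  rewrite normrM (le_trans (ler_wpM2r _ (abs_expRB1_le a))) //.
  rewrite -mulrA ler_pM // ?expR_ge0 ?mulr_ge0 //.
  by rewrite (le_trans _ ab) // ler_wpM2l // abs_sin_le.
have t4 : `|sin b - b| <= n * n by exact: le_trans (abs_sinB_le_sqr b) bb.
rewrite (le_trans (hypot_le_abs_add _ _)) //.
have -> : expR a * cos b - 1 - a = (expR a - 1 - a) + expR a * (cos b - 1) by ring.
have -> : expR a * sin b - 0 - b = (expR a - 1) * sin b + (sin b - b) by ring.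
have := ler_normD (expR a - 1 - a) (expR a * (cos b - 1)).
have := ler_normD ((expR a - 1) * sin b) (sin b - b).
have : 0 <= n * n by rewrite mulr_ge0 // sqrtr_ge0.
rewrite expr2; lra.
Qed.

Lemma is_derive_cexp (z : CC R) : is_derive z (1 : CC R) (@cexp R) (cexp z).
Proof.
have slope1 : (fun h : CC R => h^-1 * (cexp h - 1)) h @[h --> (0 : CC R)^'] --> (1 : CC R).
  apply: (@cvg_to1_of_linear_error _ _ (3 * expR 1 + 1)%:C).
    by rewrite lecR addr_ge0 // mulr_ge0 // expR_ge0.
  move=> h h0 h1.
  have -> : h^-1 * (cexp h - 1) - 1 = h^-1 * (cexp h - 1 - h).
    by rewrite [in RHS]mulrBr mulVf.
  rewrite normrM normfV (le_trans (ler_wpM2l _ (@cexpB1B_le h h1))) ?invr_ge0 //.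
  by rewrite expr2 mulrCA mulKf ?normr_eq0.
have slopez : (fun h : CC R => h^-1 *: ((@cexp R \o shift z) (h *: 1) - cexp z))
    h @[h --> (0 : CC R)^'] --> cexp z.
  suff -> : (fun h : CC R => h^-1 *: ((@cexp R \o shift z) (h *: 1) - cexp z)) =
            (fun h => cexp z * (h^-1 * (cexp h - 1))).
    by rewrite -[X in _ --> X]mulr1; apply: cvgMl_tmp.
  apply: funext => h /=; rewrite cexpD -[h%:A]/(h * 1) mulr1.
  by rewrite -[h^-1 *: _]/(h^-1 * _); ring.
apply: DeriveDef; last exact: cvg_lim slopez.
by apply/cvg_ex; exists (cexp z).
Qed.

Lemma cexp_neq0 (z : CC R) : cexp z != 0.
Proof.
apply/eqP => z0; have := cexpD z (- z).
by rewrite subrr cexp0 z0 mul0r; apply/eqP; rewrite oner_neq0.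
Qed.

Lemma is_derive_log {ell w : CC R -> CC R} {x dw : CC R} :
  derivable ell x 1 -> (\forall h \near x, cexp (ell h) = w h) ->
  is_derive x (1 : CC R) w dw -> is_derive x (1 : CC R) ell (dw / w x).
Proof.
move=> ellx expw [_ <-].
have expell := is_derive1_chain (derivableP ellx) (is_derive_cexp (ell x)).
have wx : cexp (ell x) = w x := nbhs_singleton expw.
rewrite -(near_eq_derive (1 : CC R) expw) derive_val -wx /GRing.scale /=.
by rewrite mulfK ?cexp_neq0.
Qed.

End complex_exponential.

Section moving_one_point.
Context {R : realType} {N : nat}.
Implicit Types (p : pt R N.+1) (h : CC R).

Definition xdiff p (i : 'I_N) : CC R := xco p (iN i) - xco p ord_max.
Definition tdiff p (i : 'I_N) : CC R := tco p (iN i) - tco p ord_max.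
Definition ediff (j : 'I_N.+1) (i : 'I_N) : CC R :=
  ('e_j : 'rV[CC R]_N.+1) 0 (iN i) - ('e_j : 'rV[CC R]_N.+1) 0 ord_max.

Definition xline p (j : 'I_N.+1) h : pt R N.+1 := h *: ('e_j, 0) + p.

Lemma xline0 p j : xline p j 0 = p.
Proof. by rewrite /xline scale0r add0r. Qed.

Lemma is_derive_xline p j :
  is_derive (0 : CC R) (1 : CC R) (xline p j) ('e_j, 0).
Proof.
have := is_deriveD (is_derive1_scaler ('e_j, 0) (is_derive_id (0 : CC R) (1 : CC R)))
                   (is_derive_cst p (0 : CC R) (1 : CC R)).
by rewrite scale1r addr0.
Qed.

Lemma xdiff_xline p j h i : xdiff (xline p j h) i = xdiff p i + h * ediff j i.
Proof. by rewrite /xdiff /ediff /xco /xline /= !mxE; ring. Qed.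

Lemma tco_xline p j h m : tco (xline p j h) m = tco p m.
Proof. by rewrite /tco /xline /= !mxE mulr0 add0r. Qed.

Lemma wq_xline p j h i :
  wq i (xline p j h) = (xdiff p i + h * ediff j i) ^+ 2 / tdiff p i.
Proof. by rewrite /wq -/(xdiff _ i) xdiff_xline !tco_xline. Qed.

Lemma subst_pt_xline p j h :
  subst_pt (xline p j h) =
  \sum_(i < N) (- tdiff p i / (xdiff p i + h * ediff j i)) *: (('e_i, 0) : pt R N)
  + (0, \row_(k < N) tco p (iN k)).
Proof.
rewrite sum_scale_pair0 /subst_pt; congr (_, _); apply/rowP => k; rewrite !mxE.
- rewrite summxE (bigD1 k) //= big1 ?addr0 => [|i ik]; last first.
    by rewrite !mxE eq_sym (negbTE ik) mulr0.
  by rewrite !mxE !eqxx mulr1 -/(xdiff _ k) xdiff_xline /tdiff !tco_xline.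
- by rewrite tco_xline add0r.
Qed.

Lemma xco_subst_pt p i : xco (subst_pt p) i = - tdiff p i / xdiff p i.
Proof. by rewrite /xco /subst_pt mxE. Qed.

End moving_one_point.

Section Upsilon_x_derivatives.
Context {R : realType} {N : nat} {chi : 'I_N.+1 -> CC R}.
Context {D : set (pt R N)} {Psi : pt R N -> CC R} {U : set (pt R N.+1)}.
Context {L : 'I_N -> pt R N.+1 -> CC R}.
Hypothesis hPsi : holomorphic_on D Psi.
Hypothesis hU : open U.
Hypothesis hUx : forall p, U p -> forall j : 'I_N, xco p (iN j) <> xco p ord_max.
Hypothesis hUt : forall p, U p -> forall j : 'I_N, tco p (iN j) <> tco p ord_max.
Hypothesis hUD : forall p, U p -> D (subst_pt p).
Hypothesis hL : forall j, log_branch U (wq j) (L j).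

Lemma xdiff_neq0 p i : U p -> xdiff p i != 0.
Proof. by move=> Up; rewrite subr_eq0; apply/eqP; exact: hUx. Qed.

Lemma tdiff_neq0 p i : U p -> tdiff p i != 0.
Proof. by move=> Up; rewrite subr_eq0; apply/eqP; exact: hUt. Qed.

Lemma is_derive_log_branch_xline p j i : U p ->
  is_derive (0 : CC R) (1 : CC R) (fun h => L i (xline p j h))
    (2 * ediff j i / xdiff p i).
Proof.
move=> Up; have xd : differentiable (xline p j) 0.
  have := is_derive_xline p j => dxline; apply/derivable1_diffP; exact: ex_derive.
have Ld : derivable (fun h => L i (xline p j h)) 0 1.
  apply/derivable1_diffP/differentiable_comp => //.
  by rewrite xline0; exact: (hL i).1.
have near_U : \forall h \near (0 : CC R), U (xline p j h).
  apply: (differentiable_continuous xd); rewrite xline0.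
  by apply: open_nbhs_nbhs; split.
have wd : is_derive (0 : CC R) (1 : CC R) (fun h => wq i (xline p j h))
    (2 * xdiff p i * ediff j i / tdiff p i).
  under eq_fun do rewrite wq_xline.
  by apply: is_derive_eq; rewrite /GRing.scale /=; ring.
have expw : \forall h \near (0 : CC R),
    cexp (L i (xline p j h)) = wq i (xline p j h).
  by apply: filterS near_U => h; exact: (hL i).2.
have := is_derive_log Ld expw wd; rewrite wq_xline mul0r addr0 => /is_derive_eq; apply.
by field; rewrite xdiff_neq0 ?tdiff_neq0.
Qed.

Definition Upsilon_factor (p : pt R N.+1) : CC R :=
  \prod_(k < N) cexp (chi (iN k) * L k p).

Lemma is_derive_Upsilon_factor_xline p j : U p ->
  is_derive (0 : CC R) (1 : CC R) (fun h => Upsilon_factor (xline p j h))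
    ((\sum_(i < N) chi (iN i) * (2 * ediff j i / xdiff p i)) * Upsilon_factor p).
Proof.
move=> Up; under eq_fun do rewrite /Upsilon_factor -cexp_sum.
have exponent := is_derive1_sum (fun i =>
  is_deriveZ (chi (iN i)) (is_derive_log_branch_xline p j i Up)).
have := is_derive1_chain exponent (is_derive_cexp _).
move=> /is_derive_eq; apply.
by rewrite /= xline0 cexp_sum.
Qed.

Lemma is_derive_Psi_subst_xline p j : U p ->
  is_derive (0 : CC R) (1 : CC R) (fun h => Psi (subst_pt (xline p j h)))
    (\sum_(i < N) tdiff p i * ediff j i / xdiff p i ^+ 2 * dx Psi (subst_pt p) i).
Proof.
move=> Up; set u := fun i : 'I_N => ((('e_i : 'rV[CC R]_N), 0) : pt R N).
pose g (h : CC R) : pt R N :=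
  \sum_(i < N) (- tdiff p i / (xdiff p i + h * ediff j i)) *: u i
  + (0, \row_(k < N) tco p (iN k)).
have -> : (fun h => Psi (subst_pt (xline p j h))) = Psi \o g.
  by apply: funext => h; rewrite /= subst_pt_xline.
have gd : is_derive (0 : CC R) (1 : CC R) g
    (\sum_(i < N) (tdiff p i * ediff j i / xdiff p i ^+ 2) *: u i).
  have := is_deriveD (is_derive1_sum (fun i => is_derive1_scaler (u i)
      (is_derive_inv_affine (xdiff p i) (tdiff p i) (ediff j i) (xdiff_neq0 p i Up))))
    (is_derive_cst ((0, \row_(k < N) tco p (iN k)) : pt R N) (0 : CC R) (1 : CC R)).
  by rewrite addr0.
have g0 : g 0 = subst_pt p by rewrite /g -subst_pt_xline xline0.
have Psid : differentiable Psi (subst_pt p) := hPsi.2 _ (hUD p Up).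
have := is_derive1_diff_comp gd; rewrite g0 => /(_ _ Psi Psid).
move=> /is_derive_eq; apply; rewrite linear_sum.
by apply: eq_bigr => i _; rewrite linearZ /= /dx -deriveE.
Qed.

(* d Upsilon / d x_i for i <= N; see [dx_Upsilon] for the general x_j *)
Definition Upsilon_dxi p (i : 'I_N) : CC R :=
  Upsilon_factor p * (2 * chi (iN i) / xdiff p i * Psi (subst_pt p)
                      + tdiff p i / xdiff p i ^+ 2 * dx Psi (subst_pt p) i).

Lemma dx_Upsilon p j : U p ->
  dx (Upsilon chi L Psi) p j = \sum_(i < N) ediff j i * Upsilon_dxi p i.
Proof.
move=> Up; rewrite /dx derive_lineE.
have dU := is_deriveM (is_derive_Upsilon_factor_xline p j Up)
                      (is_derive_Psi_subst_xline p j Up).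
have -> : (fun h => Upsilon chi L Psi (h *: ('e_j, 0) + p)) =
    (fun h => Upsilon_factor (xline p j h)) * (fun h => Psi (subst_pt (xline p j h))).
  by apply: funext.
rewrite derive_val /= xline0 /GRing.scale /= mulr_sumr mulr_suml mulr_sumr -big_split /=.
apply: eq_bigr => i _; rewrite /Upsilon_dxi.
by field; rewrite xdiff_neq0.
Qed.

Lemma sum_mul_dx_Upsilon (w : 'I_N.+1 -> CC R) p : U p ->
  \sum_(j < N.+1) w j * dx (Upsilon chi L Psi) p j =
  \sum_(i < N) (w (iN i) - w ord_max) * Upsilon_dxi p i.
Proof.
move=> Up; under eq_bigr do rewrite dx_Upsilon // mulr_sumr.
rewrite exchange_big /=; apply: eq_bigr => i _.
under eq_bigr do rewrite /ediff mulrA mulrBr mulrBl.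
by rewrite sumrB -!mulr_suml !sum_mul_delta mulrBl.
Qed.

Lemma tdiff_mul_Upsilon_dxi p i : U p ->
  tdiff p i * Upsilon_dxi p i =
  - Upsilon_factor p * (- xco (subst_pt p) i ^+ 2 * dx Psi (subst_pt p) i
                        + 2 * chi (iN i) * xco (subst_pt p) i * Psi (subst_pt p)).
Proof.
move=> Up; rewrite /Upsilon_dxi xco_subst_pt.
by have := xdiff_neq0 p i Up; move: (xdiff p i) => x x0; field.
Qed.

Lemma xdiff_mul_Upsilon_dxi p i : U p ->
  - 2 * xdiff p i * Upsilon_dxi p i =
  - Upsilon_factor p * (- 2 * xco (subst_pt p) i * dx Psi (subst_pt p) i
                        + 2 * chi (iN i) * Psi (subst_pt p))
  - 2 * chi (iN i) * Upsilon chi L Psi p.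
Proof.
move=> Up; rewrite /Upsilon_dxi xco_subst_pt /Upsilon -/(Upsilon_factor p).
by have := xdiff_neq0 p i Up; move: (xdiff p i) => x x0; field.
Qed.

End Upsilon_x_derivatives.

Theorem mainTheorem8 (R : realType) (N : nat) (hN : (0 < N)%N)
  (chi : 'I_N.+1 -> CC R) (k : CC R) (hk : chi ord_max = k / 2)
  (D : set (pt R N)) (Psi : pt R N -> CC R) (hPsi : holomorphic_on D Psi)
  (hh : forall p, D p ->
     \sum_(j < N) (- 2 * xco p j * dx Psi p j + 2 * chi (iN j) * Psi p) = 0)
  (he : forall p, D p -> \sum_(j < N) dx Psi p j = 0)
  (hf : forall p, D p ->
     \sum_(j < N) (- (xco p j ^+ 2) * dx Psi p j
                   + 2 * chi (iN j) * xco p j * Psi p) = 0)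
  (U : set (pt R N.+1)) (hU : open U)
  (hUx : forall p, U p -> forall j : 'I_N, xco p (iN j) <> xco p ord_max)
  (hUt : forall p, U p -> forall j : 'I_N, tco p (iN j) <> tco p ord_max)
  (hUD : forall p, U p -> D (subst_pt p))
  (L : 'I_N -> pt R N.+1 -> CC R) (hL : forall j, log_branch U (wq j) (L j)) :
  forall p, U p ->
    [/\ \sum_(j < N.+1) dx (Upsilon chi L Psi) p j = 0,
        \sum_(j < N.+1) tco p j * dx (Upsilon chi L Psi) p j = 0
      & \sum_(j < N.+1) (- 2 * xco p j * dx (Upsilon chi L Psi) p j
                         + 2 * chi j * Upsilon chi L Psi p)
          - k * Upsilon chi L Psi p = 0].
Proof.
move=> p Up; have substD := hUD p Up.
have weighted := sum_mul_dx_Upsilon hPsi hU hUx hUt hUD hL.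
split.
- transitivity (\sum_(j < N.+1) 1 * dx (Upsilon chi L Psi) p j).
    by apply: eq_bigr => j _; rewrite mul1r.
  by rewrite weighted // big1 // => i _; rewrite subrr mul0r.
- rewrite weighted //.
  under eq_bigr do rewrite -/(tdiff p _) (tdiff_mul_Upsilon_dxi hUx _ _ Up).
  by rewrite -mulr_sumr hf // mulr0.
- rewrite big_split /= weighted //=.
  under eq_bigr do rewrite -mulrBr -/(xdiff p _) (xdiff_mul_Upsilon_dxi hUx _ _ Up).
  rewrite sumrB -mulr_sumr hh // mulr0 sub0r big_ord_recr /= hk addrA addNr add0r.
  by field.
Qed.
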